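(* Let $f:\mathbb{N}\to\mathbb{N}\cup\{\infty\}$ be any function, and let $\mathbf{P}_f$ be the set of integer partitions in which, for every $i$, the part $i$ appears at most $f(i)$ times. Then $\mathbf{P}_f$ is a distributive sublattice of the Young lattice; that is, $\mathbf{P}_f$ is closed under the partwise join and meet of the Young lattice.
   Context: $\mathbb{N}$ denotes the positive integers. The Young lattice is the set of all integer partitions (including the empty one) ordered by $\lambda\le\mu$ iff $\lambda_i\le\mu_i$ for all $i$ (parts beyond the length being $0$); its join and meet are given partwise by $(\lambda\vee\mu)_i=\max(\lambda_i,\mu_i)$ and $(\lambda\wedge\mu)_i=\min(\lambda_i,\mu_i)$. *)

From mathcomp Require Import all_boot.
Set Implicit Arguments. Unset Strict Implicit. Unset Printing Implicit Defensive.

Definition is_partition (l : seq nat) : bool :=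
  sorted geq l && all (fun x => 0 < x) l.

Definition part (l : seq nat) (i : nat) : nat := nth 0 l i.

Definition yjoin (l m : seq nat) : seq nat :=
  mkseq (fun i => maxn (part l i) (part m i)) (maxn (size l) (size m)).
Definition ymeet (l m : seq nat) : seq nat :=
  mkseq (fun i => minn (part l i) (part m i)) (minn (size l) (size m)).

(* f : N -> N u {oo}, with None standing for oo (the value at 0 is irrelevant). *)
Definition mult_ok (f : nat -> option nat) (l : seq nat) : Prop :=
  forall i, 0 < i ->
    match f i with Some k => count_mem i l <= k | None => true end.

Definition in_Pf (f : nat -> option nat) (l : seq nat) : Prop :=
  is_partition l /\ mult_ok f l.

From mathcomp Require Import all_boot.
From mathcomp Require Import zify.

Set Implicit Arguments.
Unset Strict Implicit.
Unset Printing Implicit Defensive.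

(* The number of parts [>= v] of a partition is the v-th part of its conjugate,
   and the conjugate of a partwise max (min) is the partwise max (min) of the
   conjugates.  The part v occurs [conj_part l v - conj_part l v.+1] times, and
   [maxn a c - maxn b d] and [minn a c - minn b d] are both bounded by
   [maxn (a - b) (c - d)], so multiplicity bounds pass to joins and meets. *)

Definition conj_part (l : seq nat) (v : nat) : nat := count (leq v) l.

Lemma part_yjoin l m k : part (yjoin l m) k = maxn (part l k) (part m k).
Proof.
rewrite /yjoin /part; case: (ltnP k (maxn (size l) (size m))) => hk.
  by rewrite nth_mkseq.
move: hk; rewrite geq_max => /andP[hl hm].
by rewrite !nth_default ?size_mkseq ?geq_max ?hl.
Qed.

Lemma part_ymeet l m k : part (ymeet l m) k = minn (part l k) (part m k).
Proof.
rewrite /ymeet /part; case: (ltnP k (minn (size l) (size m))) => hk.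
  by rewrite nth_mkseq.
rewrite nth_default ?size_mkseq //.
by move: hk; rewrite geq_min => /orP[] hk; rewrite (nth_default 0 hk) ?min0n ?minn0.
Qed.

Lemma sorted_geqP l : reflect (forall i, part l i.+1 <= part l i) (sorted geq l).
Proof.
apply: (iffP (sortedP 0)) => [H i | H i _]; last exact: H.
rewrite /part; case: (ltnP i.+1 (size l)) => hi; first exact: H.
by rewrite (nth_default 0 hi).
Qed.

Lemma part_gt0 l i : is_partition l -> (0 < part l i) = (i < size l).
Proof.
case/andP=> _ /(all_nthP 0) pos; rewrite /part.
by case: (ltnP i (size l)) => hi; [exact: pos | rewrite nth_default].
Qed.

Lemma conj_partE l v k : sorted geq l -> 0 < v ->
  (k < conj_part l v) = (v <= part l k).
Proof.
rewrite /conj_part /part.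
elim: l k => [|x l IH] k /=; first by rewrite nth_nil; case: v.
rewrite path_sortedE; last exact: rev_trans leq_trans.
case/andP=> /allP le_x sorted_l v_gt0.
case: (leqP v x) => [le_vx | lt_xv].
  by case: k => [|k] //; rewrite add1n ltnS IH.
have /eqP -> : count (leq v) l == 0.
  rewrite -leqn0 leqNgt -has_count; apply/hasPn => y /le_x le_yx.
  by rewrite -ltnNge (leq_ltn_trans le_yx lt_xv).
apply/esym/negbTE; rewrite -ltnNge; case: k => [|k] //=.
case: (ltnP k (size l)) => hk; last by rewrite nth_default.
exact: leq_ltn_trans (le_x _ (mem_nth 0 hk)) lt_xv.
Qed.

Lemma eqn_from_ltn x y : (forall k, (k < x) = (k < y)) -> x = y.
Proof.
move=> H; case: (ltngtP x y) => // [lt_xy | lt_yx].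
  by have := H x; rewrite ltnn lt_xy.
by have := H y; rewrite ltnn lt_yx.
Qed.

Lemma count_memE v s : count_mem v s = conj_part s v - conj_part s v.+1.
Proof.
suff -> : conj_part s v = count_mem v s + conj_part s v.+1 by rewrite addnK.
by elim: s => //= x s ->; rewrite /conj_part /= addnACA; case: (ltngtP v x).
Qed.

Lemma is_partition_sorted l : is_partition l -> sorted geq l.
Proof. by case/andP. Qed.

Lemma part_leSn l i : is_partition l -> part l i.+1 <= part l i.
Proof. by move/is_partition_sorted/sorted_geqP. Qed.

Lemma is_partition_yjoin l m :
  is_partition l -> is_partition m -> is_partition (yjoin l m).
Proof.
move=> pl pm; apply/andP; split.
  apply/sorted_geqP => i; rewrite !part_yjoin geq_max !leq_max.
  by rewrite !part_leSn ?orbT.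
apply/(all_nthP 0) => i; rewrite size_mkseq => hi.
by rewrite -/(part _ i) part_yjoin leq_max !part_gt0 // -leq_max.
Qed.

Lemma is_partition_ymeet l m :
  is_partition l -> is_partition m -> is_partition (ymeet l m).
Proof.
move=> pl pm; apply/andP; split.
  apply/sorted_geqP => i; rewrite !part_ymeet leq_min !geq_min.
  by rewrite !part_leSn ?orbT.
apply/(all_nthP 0) => i; rewrite size_mkseq => hi.
by rewrite -/(part _ i) part_ymeet leq_min !part_gt0 // -leq_min.
Qed.

Lemma conj_part_yjoin l m v : is_partition l -> is_partition m -> 0 < v ->
  conj_part (yjoin l m) v = maxn (conj_part l v) (conj_part m v).
Proof.
move=> pl pm v_gt0; apply: eqn_from_ltn => k.
have sj := is_partition_sorted (is_partition_yjoin pl pm).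
have [sl sm] := (is_partition_sorted pl, is_partition_sorted pm).
by rewrite leq_max !conj_partE // part_yjoin leq_max.
Qed.

Lemma conj_part_ymeet l m v : is_partition l -> is_partition m -> 0 < v ->
  conj_part (ymeet l m) v = minn (conj_part l v) (conj_part m v).
Proof.
move=> pl pm v_gt0; apply: eqn_from_ltn => k.
have sj := is_partition_sorted (is_partition_ymeet pl pm).
have [sl sm] := (is_partition_sorted pl, is_partition_sorted pm).
by rewrite leq_min !conj_partE // part_ymeet leq_min.
Qed.

Lemma subn_maxn2 a b c d : maxn a c - maxn b d <= maxn (a - b) (c - d).
Proof. lia. Qed.

Lemma subn_minn2 a b c d : minn a c - minn b d <= maxn (a - b) (c - d).
Proof. lia. Qed.

Lemma mult_ok_dominated f l m t : mult_ok f l -> mult_ok f m ->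
  (forall v, 0 < v -> count_mem v t <= maxn (count_mem v l) (count_mem v m)) ->
  mult_ok f t.
Proof.
move=> ok_l ok_m dom v v_gt0; move: (ok_l v v_gt0) (ok_m v v_gt0).
case: (f v) => // k cnt_l cnt_m.
by apply: leq_trans (dom v v_gt0) _; rewrite geq_max cnt_l cnt_m.
Qed.

Theorem mainTheorem4 (f : nat -> option nat) (l m : seq nat) :
  in_Pf f l -> in_Pf f m -> in_Pf f (yjoin l m) /\ in_Pf f (ymeet l m).
Proof.
move=> [pl ok_l] [pm ok_m]; split; split.
- exact: is_partition_yjoin.
- apply: mult_ok_dominated ok_l ok_m _ => v v_gt0.
  by rewrite !count_memE !conj_part_yjoin // subn_maxn2.
- exact: is_partition_ymeet.
- apply: mult_ok_dominated ok_l ok_m _ => v v_gt0.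
  by rewrite !count_memE !conj_part_ymeet // subn_minn2.
Qed.
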